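(* Fix a constant $c>0$ and an interval $I\subset\mathbb{R}$ of finite Lebesgue measure, and write $B^h_k:=B^h_k(\chi_I)$. Let $n\geq 3$ and define $C_1(n):=[B^0_n,B^n_0]$ and, for $k\geq 2$, $C_k(n):=[B^0_n,C_{k-1}(n)]$. Then \[ C_3(n)=\beta(n)\,B^0_{2n}+N(n), \] where \[ \beta(n):=\sum_{L_1=1}^{n-1}\sum_{L_2=1}^{n-L_1} b_{L_1}(n,n)\,b_{L_2}(n,n-L_1)\,b_{n-(L_1+L_2)}\big(n,n-(L_1+L_2)\big)\in\mathbb{R}\setminus\{0\}, \] \[ N(n):=\sum_{L_1=1}^{n-1}\sum_{L_2=1}^{n-L_1}\sum_{L_3=1}^{n-(L_1+L_2)} b_{L_1}(n,n)\,b_{L_2}(n,n-L_1)\,b_{L_3}\big(n,n-(L_1+L_2)\big)\,B^{\,n-(L_1+L_2+L_3)}_{\,3n-(L_1+L_2+L_3)}, \] the triple sum running only over those $(L_1,L_2,L_3)$ with $L_1+L_2+L_3\neq n$. Consequently \[ N(n)^*=\sum_{L_1,L_2,L_3}(\text{same coefficients})\,B_{\,n-(L_1+L_2+L_3)}^{\,3n-(L_1+L_2+L_3)}. \]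
   Context: The RPQWN (renormalized powers of quantum white noise) algebra is the $*$-Lie algebra generated by symbols $B^h_k(f)$, $h,k\in\{0,1,2,\dots\}$, $f$ a test function, with involution $(B^h_k(f))^*=B^k_h(\bar f)$, linear in $f$, and commutation relations \[ [B^N_K(\bar g),B^n_k(f)]=\sum_{L=1}^{K\wedge n} b_L(K,n)\,B^{N+n-L}_{K+k-L}(\bar g f)-\sum_{L=1}^{k\wedge N} b_L(k,N)\,B^{N+n-L}_{K+k-L}(\bar g f), \] where $b_x(y,z):=\epsilon_{y,0}\,\epsilon_{z,0}\binom{y}{x}z^{(x)}c^{x-1}$, $\epsilon_{n,k}:=1-\delta_{n,k}$ ($\delta$ the Kronecker delta), $z^{(x)}:=z(z-1)\cdots(z-x+1)$ with $z^{(0)}=1$, and an empty sum is $0$. These relations arise from the white noise relations $[b_t,b_s^\dagger]=\delta(t-s)$ with the renormalization $\delta^l(t)=c^{l-1}\delta(t)$ for $l\ge2$. $\chi_I$ denotes the indicator of $I$, so $\chi_I^2=\chi_I$. *)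

From HB Require Import structures.
From mathcomp Require Import all_boot all_order all_algebra.
From mathcomp Require Import all_classical all_reals all_analysis.
Set Implicit Arguments. Unset Strict Implicit. Unset Printing Implicit Defensive.
Import Order.TTheory GRing.Theory Num.Theory.
Local Open Scope ring_scope.

(* b_x(y,z) = eps_{y,0} eps_{z,0} binom(y,x) z^{(x)} c^{x-1}
   (z^{(x)} is the falling factorial z ^_ x; the exponent x-1 is an integer). *)
Definition bcoef (C : numFieldType) (c : C) (x y z : nat) : C :=
  ((y != 0%N) && (z != 0%N))%:R * ('C(y, x))%:R * (z ^_ x)%:R * c ^ (x%:Z - 1).

Definition chi (R : realType) (C : numClosedFieldType) (I : interval R) : R -> C :=
  fun x => (x \in I)%:R.

(* the RPQWN structure on (L, br, star, B): a *-Lie algebra over C with elements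
   B h k f (= B^h_k(f)) for test functions f in TF, satisfying the RPQWN relations. *)
Definition is_rpqwn (C : numClosedFieldType) (c : C) (T : Type) (TF : set (T -> C))
  (L : lmodType C) (br : L -> L -> L) (star : L -> L) (B : nat -> nat -> (T -> C) -> L) : Prop :=
      (forall a x y z, br (a *: x + y) z = a *: br x z + br y z) /\
      (forall a x y z, br z (a *: x + y) = a *: br z x + br z y) /\
      (forall x, br x x = 0) /\
      (forall x y z, br x (br y z) + br y (br z x) + br z (br x y) = 0) /\
      (forall a x y, star (a *: x + y) = a^* *: star x + star y) /\
      (forall x, star (star x) = x) /\
      (forall x y, star (br x y) = br (star y) (star x)) /\
      (forall h k a f g, TF f -> TF g ->
         B h k (fun t => a * f t + g t) = a *: B h k f + B h k g) /\
      (forall h k f, TF f -> star (B h k f) = B k h (fun t => (f t)^*)) /\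
      (forall N K n k f g, TF f -> TF g ->
         br (B N K (fun t => (g t)^*)) (B n k f) =
           \sum_(1 <= L < (minn K n).+1)
              bcoef c L K n *: B (N + n - L)%N (K + k - L)%N (fun t => (g t)^* * f t)
         - \sum_(1 <= L < (minn k N).+1)
              bcoef c L k N *: B (N + n - L)%N (K + k - L)%N (fun t => (g t)^* * f t)).

(* Cseq 0 = B^n_0, Cseq (k+1) = [B^0_n, Cseq k]; so Cseq k = C_k(n) for k >= 1 *)
Fixpoint Cseq (C : numClosedFieldType) (L : lmodType C) (br : L -> L -> L)
   (Bc : nat -> nat -> L) (n k : nat) : L :=
  match k with
  | 0 => Bc n 0%N
  | k'.+1 => br (Bc 0%N n) (Cseq br Bc n k')
  end.

From HB Require Import structures.
From mathcomp Require Import all_boot all_order all_algebra.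
From mathcomp Require Import all_classical all_reals all_analysis.
From mathcomp Require Import zify.
Set Implicit Arguments. Unset Strict Implicit. Unset Printing Implicit Defensive.
Import Order.TTheory GRing.Theory Num.Theory.
Local Open Scope ring_scope.

(* Since chi_I is real and idempotent, [B^0_K, B^m_k] expands by the RPQWN
   relations into the single sum of the b_L(K, m) B^{m-L}_{K+k-L}, the second
   sum being empty.  Iterating three times from B^n_0 gives a triple sum; the
   terms with L1 + L2 + L3 = n are exactly those of the form B^0_{2n}, and
   collecting them yields beta(n) B^0_{2n} + N(n).  All b's are >= 0 when
   c > 0, and the term L1 = L2 = 1, L3 = n - 2 is > 0 when n >= 3, so
   beta(n) != 0.  Real coefficients are fixed by the involution, so N(n)^* is
   obtained by swapping the indices of each B. *)

Lemma bcoef_ge0 (C : numFieldType) (c : C) x y z : 0 < c -> 0 <= bcoef c x y z.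
Proof.
by move=> c_gt0; rewrite /bcoef mulr_ge0 ?(ltW (exprz_gt0 _ c_gt0)).
Qed.

Lemma bcoef_gt0 (C : numFieldType) (c : C) x y z :
  0 < c -> (0 < y)%N -> (0 < z)%N -> (x <= y)%N -> (x <= z)%N ->
  0 < bcoef c x y z.
Proof.
move=> c_gt0 y_gt0 z_gt0 xy xz; rewrite /bcoef -!lt0n y_gt0 z_gt0 /=.
by rewrite mulr_gt0 ?exprz_gt0 // -!natrM ltr0n !muln_gt0 bin_gt0 ffact_gt0 xy xz.
Qed.

Lemma bcoef0r (C : numFieldType) (c : C) x y : bcoef c x y 0 = 0.
Proof. by rewrite /bcoef andbF !mul0r. Qed.

Lemma big_nat1_split_last (V : zmodType) (m : nat) (F : nat -> V) :
  (0 < m)%N ->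
  \sum_(1 <= i < m.+1) F i = \sum_(1 <= i < m.+1 | i != m) F i + F m.
Proof.
case: m => // m _.
rewrite [in RHS]big_mkcond !(big_nat_recr m.+1) //= eqxx addr0; congr (_ + _).
by apply: eq_big_nat => i /andP[_ im]; rewrite ltn_eqF.
Qed.

Section Semilinear.
Variables (K : pzRingType) (V : lmodType K) (s : K -> K) (f : V -> V).
Hypotheses (s1 : s 1 = 1) (f_semilinear : forall a x y, f (a *: x + y) = s a *: f x + f y).

Lemma semilinear_add : {morph f : x y / x + y}.
Proof. by move=> x y; rewrite -[x in f (x + _)]scale1r f_semilinear s1 scale1r. Qed.

Lemma semilinear0 : f 0 = 0.
Proof. by apply: (addrI (f 0)); rewrite -semilinear_add !addr0. Qed.

Lemma semilinearZ a x : f (a *: x) = s a *: f x.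
Proof. by rewrite -[a *: x]addr0 f_semilinear semilinear0 addr0. Qed.

Lemma semilinear_sum (I : Type) (r : seq I) (P : pred I) (F : I -> V) :
  f (\sum_(i <- r | P i) F i) = \sum_(i <- r | P i) f (F i).
Proof. exact: (big_morph f semilinear_add semilinear0). Qed.
End Semilinear.

Section RPQWNIndicator.
Variables (C : numClosedFieldType) (c : C) (T : Type) (TF : set (T -> C)).
Variables (L : lmodType C) (br : L -> L -> L) (star : L -> L).
Variable B : nat -> nat -> (T -> C) -> L.
Hypothesis rpqwn : is_rpqwn c TF br star B.
Variable f : T -> C.
Hypotheses (TFf : TF f) (f_real : forall t, (f t)^* = f t)
  (f_idem : forall t, f t * f t = f t).

Let Bf h k := B h k f.

Lemma br_linear_r z : forall a x y, br z (a *: x + y) = a *: br z x + br z y.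
Proof. by case: rpqwn => _ [brr _] a x y; apply: brr. Qed.

Lemma star_semilinear : forall a x y, star (a *: x + y) = a^* *: star x + star y.
Proof. by case: rpqwn => _ [_ [_ [_ [stl _]]]]. Qed.

Lemma star_Bf h k : star (Bf h k) = Bf k h.
Proof.
case: rpqwn => _ [_ [_ [_ [_ [_ [_ [_ [Bstar _]]]]]]]].
by rewrite /Bf Bstar //; congr (B _ _ _); apply: funext => t; rewrite f_real.
Qed.

Lemma br_B0 K m k :
  br (Bf 0 K) (Bf m k) =
  \sum_(1 <= i < (minn K m).+1) bcoef c i K m *: Bf (m - i) (K + k - i).
Proof.
case: rpqwn => _ [_ [_ [_ [_ [_ [_ [_ [_ Bcomm]]]]]]]].
have f_conj : (fun t => (f t)^*) = f by apply: funext => t; rewrite f_real.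
have f_conjM : (fun t => (f t)^* * f t) = f.
  by apply: funext => t; rewrite f_real f_idem.
have := Bcomm 0%N K m k f f TFf TFf.
rewrite f_conj f_conjM minn0 (@big_geq _ _ _ 1 1) // subr0 => ->.
by apply: eq_bigr => i _; rewrite add0n.
Qed.

Lemma Cseq3_expand n :
  Cseq br Bf n 3 =
  \sum_(1 <= L1 < n.+1) \sum_(1 <= L2 < (n - L1).+1)
    \sum_(1 <= L3 < (n - (L1 + L2)).+1)
      (bcoef c L1 n n * bcoef c L2 n (n - L1) * bcoef c L3 n (n - (L1 + L2)))
        *: Bf (n - (L1 + L2 + L3)) (n + (n + (n - L1) - L2) - L3).
Proof.
have brsum := semilinear_sum (erefl 1) (br_linear_r (Bf 0 n)).
have brZ := semilinearZ (erefl 1) (br_linear_r (Bf 0 n)).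
have C1 : Cseq br Bf n 1 = \sum_(1 <= L1 < n.+1) bcoef c L1 n n *: Bf (n - L1) (n - L1).
  by rewrite /= br_B0 minnn; apply: eq_bigr => L1 _; rewrite addn0.
have C2 : Cseq br Bf n 2 = \sum_(1 <= L1 < n.+1) \sum_(1 <= L2 < (n - L1).+1)
    (bcoef c L1 n n * bcoef c L2 n (n - L1)) *: Bf (n - (L1 + L2)) (n + (n - L1) - L2).
  rewrite -[LHS]/(br (Bf 0 n) (Cseq br Bf n 1)) C1 brsum.
  apply: eq_bigr => L1 _; rewrite brZ br_B0 (minn_idPr (leq_subr _ _)) scaler_sumr.
  by apply: eq_bigr => L2 _; rewrite scalerA subnDA.
rewrite -[LHS]/(br (Bf 0 n) (Cseq br Bf n 2)) C2 brsum.
apply: eq_bigr => L1 _; rewrite brsum; apply: eq_bigr => L2 _.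
rewrite brZ br_B0 (minn_idPr (leq_subr _ _)) scaler_sumr.
by apply: eq_bigr => L3 _; rewrite scalerA -subnDA.
Qed.

End RPQWNIndicator.

Theorem lemma1 (R : realType) (C : numClosedFieldType) (c : C) (I : interval R)
  (L : lmodType C) (TF : set (R -> C)) (br : L -> L -> L) (star : L -> L)
  (B : nat -> nat -> (R -> C) -> L) :
  0 < c ->
  (lebesgue_measure [set` I] < +oo)%E ->
  TF (chi C I) ->
  is_rpqwn c TF br star B ->
  forall n : nat, (3 <= n)%N ->
  let Bc := fun h k => B h k (chi C I) in
  let beta := \sum_(1 <= L1 < n) \sum_(1 <= L2 < (n - L1).+1)
       bcoef c L1 n n * bcoef c L2 n (n - L1)%N
         * bcoef c (n - (L1 + L2))%N n (n - (L1 + L2))%N in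
  let Nn := \sum_(1 <= L1 < n) \sum_(1 <= L2 < (n - L1).+1)
       \sum_(1 <= L3 < (n - (L1 + L2)).+1 | (L1 + L2 + L3 != n)%N)
       (bcoef c L1 n n * bcoef c L2 n (n - L1)%N * bcoef c L3 n (n - (L1 + L2))%N)
         *: Bc (n - (L1 + L2 + L3))%N (3 * n - (L1 + L2 + L3))%N in
  [/\ Cseq br Bc n 3 = beta *: Bc 0%N (2 * n)%N + Nn,
      beta != 0 &
      star Nn = \sum_(1 <= L1 < n) \sum_(1 <= L2 < (n - L1).+1)
       \sum_(1 <= L3 < (n - (L1 + L2)).+1 | (L1 + L2 + L3 != n)%N)
       (bcoef c L1 n n * bcoef c L2 n (n - L1)%N * bcoef c L3 n (n - (L1 + L2))%N)
         *: Bc (3 * n - (L1 + L2 + L3))%N (n - (L1 + L2 + L3))%N].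
Proof.
move=> c_gt0 _ TFchi rpq n n_ge3 Bc beta Nn.
have chi_real t : (chi C I t)^* = chi C I t by rewrite /chi conjC_nat.
have chi_idem t : chi C I t * chi C I t = chi C I t.
  by rewrite /chi; case: (t \in I); rewrite ?mul0r ?mulr1.
have b_ge0 L1 L2 L3 m1 m2 :
    0 <= bcoef c L1 n n * bcoef c L2 n m1 * bcoef c L3 n m2.
  by apply: mulr_ge0; [apply: mulr_ge0|]; apply: bcoef_ge0.
split.
- have n_gt0 : (0 < n)%N by apply: leq_trans n_ge3.
  rewrite (Cseq3_expand rpq TFchi chi_real chi_idem) big_nat_recr //= subnn.
  rewrite [X in _ + X]big_geq // addr0 scaler_suml -big_split.
  apply: eq_big_nat => L1 /andP[_ L1n]; rewrite scaler_suml -big_split.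
  apply: eq_big_nat => L2 /andP[_ L2n] /=.
  have [m_eq0 | m_gt0] := posnP (n - (L1 + L2)).
    by rewrite m_eq0 !big_geq // bcoef0r mulr0 scale0r addr0.
  rewrite addrC big_nat1_split_last //.
  congr (_ + _); last by congr (_ *: B _ _ _); lia.
  apply: eq_big => [L3 | L3 _]; first by apply/idP/idP => /eqP ?; apply/eqP; lia.
  by congr (_ *: B _ _ _); lia.
- rewrite psumr_neq0 => [|L1 _]; last by rewrite sumr_ge0.
  apply/hasP; exists 1%N; first by rewrite mem_index_iota; lia.
  rewrite lt0r sumr_ge0 ?andbT => [|L2 _]; last exact: b_ge0.
  rewrite psumr_neq0 => [|L2 _]; last exact: b_ge0.
  apply/hasP; exists 1%N; first by rewrite mem_index_iota; lia.
  by apply: mulr_gt0; [apply: mulr_gt0|]; apply: bcoef_gt0 => //; lia.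
- have stsum := semilinear_sum (conjC1 _) (star_semilinear rpq).
  have stZ := semilinearZ (conjC1 _) (star_semilinear rpq).
  rewrite /Nn stsum; apply: eq_bigr => L1 _; rewrite stsum; apply: eq_bigr => L2 _.
  rewrite stsum; apply: eq_bigr => L3 _.
  by rewrite stZ geC0_conj ?b_ge0 // (star_Bf rpq TFchi chi_real).
Qed.
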